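(* Let $R$ be a $*$-reducing ring and let $p,q\in R$ be projections. Then the following are equivalent: (1) $pq+qp$ is MP invertible; (2) $p+q$ and $pq$ are both MP invertible.
   Context: $R$ is an associative ring with identity $1$ and an involution $a\mapsto a^*$ (satisfying $(a^* )^*=a$, $(a+b)^*=a^*+b^*$, $(ab)^*=b^*a^*$). $R$ is $*$-reducing if $a^*a=0$ implies $a=0$ for all $a\in R$. An element $a$ is MP invertible if there is $b$ with $aba=a$, $bab=b$, $(ab)^*=ab$, $(ba)^*=ba$. A projection is an element $p$ with $p^2=p=p^*$. *)

From mathcomp Require Import all_boot all_algebra.
Set Implicit Arguments. Unset Strict Implicit. Unset Printing Implicit Defensive.
Import GRing.Theory.
Local Open Scope ring_scope.

Definition is_involution (R : pzRingType) (star : R -> R) : Prop :=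
  [/\ forall a, star (star a) = a,
      forall a b, star (a + b) = star a + star b &
      forall a b, star (a * b) = star b * star a].

Definition star_reducing (R : pzRingType) (star : R -> R) : Prop :=
  forall a : R, star a * a = 0 -> a = 0.

Definition MP_invertible (R : pzRingType) (star : R -> R) (a : R) : Prop :=
  exists b : R, [/\ a * b * a = a, b * a * b = b,
                    star (a * b) = a * b & star (b * a) = b * a].

Definition is_projection (R : pzRingType) (star : R -> R) (p : R) : Prop :=
  p * p = p /\ star p = p.

(* A self-adjoint h is MP invertible exactly when h lies in h^2 R: if h = h^2 x, then
   x^* h x is a self-adjoint group inverse of h, and a group inverse of a self-adjoint
   element is an MP inverse.  Now pq + qp = u (u - 1) with u = p + q self-adjoint, and
   since u and u - 1 commute and differ by 1, u (u - 1) lies in (u (u - 1))^2 R iff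
   u and u - 1 lie in u^2 R and (u - 1)^2 R.  It remains to see that pq is MP invertible
   iff c = p + q - 1 is, using cp = qp and cq = pq: if b is the MP inverse of pq then
   c = c^2 (b + b^* - 1), and if g is the group inverse of c then qg is the MP inverse
   of pq. *)

From Stdlib Require Import Setoid.
From mathcomp Require Import all_boot all_algebra.
Import GRing.Theory.
Set Implicit Arguments. Unset Strict Implicit.
Local Open Scope ring_scope.

Definition in_sqrR (R : pzRingType) (h : R) : Prop := exists x, h = h ^+ 2 * x.

Definition group_inverse (R : pzRingType) (h g : R) : Prop :=
  [/\ h * g = g * h, h * g * h = h & g * h * g = g].

Section GroupInverse.
Variable R : pzRingType.
Implicit Types h g u z : R.

Lemma group_inverse_sqr h g : group_inverse h g -> group_inverse (h ^+ 2) (g ^+ 2).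
Proof.
move=> [hg hgh ghg]; rewrite !expr2.
have hhgg : h * h * (g * g) = h * g by rewrite mulrA -(mulrA h h g) hg mulrA hgh.
have gghh : g * g * (h * h) = h * g by rewrite mulrA -(mulrA g g h) -hg mulrA ghg hg.
split; first by rewrite hhgg gghh.
- by rewrite hhgg mulrA hgh.
- by rewrite gghh hg mulrA ghg.
Qed.

Lemma group_inverse_comm h g z :
  group_inverse h g -> GRing.comm z h -> GRing.comm z g.
Proof.
move=> [hg hgh ghg] zh.
have gE : g = g * g * h by rewrite -{1}ghg -mulrA hg mulrA.
have hE : h = h * h * g by rewrite -{1}hgh -mulrA -hg mulrA.
have gE2 : g = h * g * g by rewrite -{1}ghg -hg.
have hE2 : h = g * h * h by rewrite -{1}hgh hg.
have ggh : g * g * h * h = h * g by rewrite -(mulrA g g h) -hg mulrA ghg -hg.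
have hhg : h * h * g * g = h * g by rewrite -(mulrA h h g) hg mulrA hgh.
have zhh : z * (h * h) = h * h * z by rewrite mulrA zh -mulrA zh mulrA.
have gz : g * z = h * g * z * g.
  rewrite {1}gE -mulrA -zh {1}hE (mulrA z (h * h) g) zhh !mulrA.
  by rewrite ggh.
have zg : z * g = g * z * h * g.
  rewrite {1}gE2 !mulrA zh {1}hE2 -(mulrA g h h) -(mulrA g (h * h) z) -zhh !mulrA.
  by rewrite -(mulrA (g * z) h g) -hhg !mulrA.
by rewrite /GRing.comm zg {1}gz -(mulrA _ g h) -(mulrA _ (g * h) g) ghg.
Qed.

Lemma group_inverse_sqrK h g : group_inverse h g -> h ^+ 2 * g = h.
Proof. by case=> hg hgh _; rewrite expr2 -mulrA hg mulrA hgh. Qed.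

Lemma in_sqrR_mul_subr1 u : in_sqrR (u * (u - 1)) -> in_sqrR u /\ in_sqrR (u - 1).
Proof.
set v := u - 1 => -[y uvE].
have cuv : GRing.comm u v := commrB (commr_refl u) (commr1 u).
have uv1 : u - v = 1 by rewrite subKr.
split.
- exists (1 - v ^+ 2 * y).
  by rewrite mulrBr mulr1 mulrA -exprMn_comm // -uvE expr2 -mulrBr uv1 mulr1.
- exists (u ^+ 2 * y - 1).
  rewrite mulrBr mulr1 mulrA -exprMn_comm; last exact: esym cuv.
  by rewrite -cuv -uvE cuv expr2 -mulrBr uv1 mulr1.
Qed.

Lemma group_inverse_in_sqrR_mul_subr1 u g1 g2 :
  group_inverse u g1 -> group_inverse (u - 1) g2 -> in_sqrR (u * (u - 1)).
Proof.
set v := u - 1 => gu gv.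
have cuv : GRing.comm u v := commrB (commr_refl u) (commr1 u).
have cg1v : GRing.comm g1 v := commr_sym (group_inverse_comm gu (commr_sym cuv)).
exists (g1 * g2).
rewrite exprMn_comm // -mulrA (mulrA _ g1) -(commrX 2 cg1v) -mulrA mulrA.
by rewrite !group_inverse_sqrK.
Qed.
End GroupInverse.

Section Involution.
Variables (R : pzRingType) (star : R -> R).
Hypothesis star_inv : is_involution star.
Implicit Types a b h u : R.

Lemma starK : involutive star. Proof. by case: star_inv. Qed.
Lemma starD a b : star (a + b) = star a + star b. Proof. by case: star_inv. Qed.
Lemma starM a b : star (a * b) = star b * star a. Proof. by case: star_inv. Qed.
Lemma star0 : star 0 = 0.
Proof. by apply: (addrI (star 0)); rewrite -starD !addr0. Qed.
Lemma starN a : star (- a) = - star a.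
Proof. by apply/eqP; rewrite -addr_eq0 -starD addNr star0. Qed.
Lemma starB a b : star (a - b) = star a - star b.
Proof. by rewrite starD starN. Qed.
Lemma star1 : star 1 = 1.
Proof. by rewrite -[star 1]mulr1 -{2}(starK 1) -starM mulr1 starK. Qed.

Definition MP_inverse a b :=
  [/\ a * b * a = a, b * a * b = b, star (a * b) = a * b & star (b * a) = b * a].

Lemma sa_group_inverse h :
  star h = h -> in_sqrR h -> exists2 g, star g = g & group_inverse h g.
Proof.
move=> sh [x hx]; rewrite expr2 in hx.
have hxE : h = star x * h * h by rewrite -{1}sh {1}hx !starM sh mulrA.
have xhE : star x * h = h * x by rewrite {1}hx !mulrA -hxE.
have hxh : h * x * h = h by rewrite -xhE -hxE.
exists (h * x * x); first by rewrite !starM sh xhE mulrA xhE.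
have hg : h * (h * x * x) = h * x by rewrite !mulrA -hx.
have gh : h * x * x * h = h * x by rewrite -xhE -!mulrA (mulrA h x h) hxh xhE.
split; first by rewrite /GRing.comm hg gh.
- by rewrite hg hxh.
- by rewrite gh !mulrA hxh.
Qed.

Lemma sa_MP_invertibleP h : star h = h -> MP_invertible star h <-> in_sqrR h.
Proof.
move=> sh; split.
- move=> [b [hbh _ _ sbh]]; exists (star b).
  by rewrite expr2 -{1}hbh -mulrA -sbh starM sh mulrA.
- move=> /(sa_group_inverse sh) [g sg [hg hgh ghg]].
  by exists g; split; rewrite // starM sg sh.
Qed.

Lemma MP_invertible_mul_subr1 u : star u = u ->
  MP_invertible star (u * (u - 1)) <-> MP_invertible star u /\ MP_invertible star (u - 1).
Proof.
move=> su; have su1 : star (u - 1) = u - 1 by rewrite starB su star1.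
have suu1 : star (u * (u - 1)) = u * (u - 1).
  by rewrite starM su1 su; apply/commr_sym/commrB; [exact: commr_refl | exact: commr1].
rewrite !sa_MP_invertibleP //; split; first exact: in_sqrR_mul_subr1.
move=> [/(sa_group_inverse su) [g1 _ gu] /(sa_group_inverse su1) [g2 _ gv]].
exact: group_inverse_in_sqrR_mul_subr1 gu gv.
Qed.

Section Projections.
Variables p q : R.
Hypotheses (pp : p * p = p) (sp : star p = p) (qq : q * q = q) (sq : star q = q).
Let c := p + q - 1.

Lemma mul_cp : c * p = q * p. Proof. by rewrite mulrBl mulrDl pp mul1r addrC addKr. Qed.
Lemma mul_pc : p * c = p * q. Proof. by rewrite mulrBr mulrDr pp mulr1 addrC addKr. Qed.
Lemma mul_cq : c * q = p * q. Proof. by rewrite mulrBl mulrDl qq mul1r addrK. Qed.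
Lemma mul_qc : q * c = q * p. Proof. by rewrite mulrBr mulrDr qq mulr1 addrK. Qed.
Lemma star_c : star c = c. Proof. by rewrite starB starD sp sq star1. Qed.
Lemma mul_cc : c * c = q * p + p * q - c.
Proof. by rewrite {2}/c mulrBr mulrDr mul_cp mul_cq mulr1. Qed.
Lemma mulDl_c : (p + q) * c = p * q + q * p.
Proof. by rewrite mulrDl mul_pc mul_qc. Qed.

Lemma comm_sqr_c : GRing.comm p (c ^+ 2) /\ GRing.comm q (c ^+ 2).
Proof.
rewrite /GRing.comm expr2; split.
- by rewrite mulrA mul_pc -mulrA mul_qc -(mulrA c c p) mul_cp !mulrA mul_cq.
- by rewrite mulrA mul_qc -mulrA mul_pc -(mulrA c c q) mul_cq !mulrA mul_cp.
Qed.

Lemma MP_inverse_mul_proj b : MP_inverse (p * q) b ->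
  [/\ b * p = b, q * b = b, q * p * b = q * p & p * q * star b = p * q].
Proof.
move=> [H1 H2 H3 H4].
have bE : b = b * star b * q * p by rewrite -{1}H2 -mulrA -H3 !starM sp sq !mulrA.
have bp : b * p = b by rewrite {1}bE -mulrA pp -bE.
have bE' : b = q * p * star b * b by rewrite -{1}H2 -H4 !starM sp sq.
have qb : q * b = b by rewrite {1}bE' !mulrA qq -bE'.
have pqb : p * q * b = p * b by rewrite -mulrA qb.
have bpq : b * (p * q) = b * q by rewrite mulrA bp.
have pbq : p * b * q = p * q by rewrite -[RHS]H1 pqb -[RHS]mulrA bpq mulrA.
have spb : star (p * b) = p * b by rewrite -pqb.
have sbq : star (b * q) = b * q by rewrite -bpq.
have sbp : star b * p = p * b by rewrite -spb starM sp.
have qsb : q * star b = b * q by rewrite -sbq starM sq.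
have qpb : q * p * b = q * p.
  by apply: (can_inj starK); rewrite !starM sp sq mulrA sbp pbq.
split=> //; apply: (can_inj starK).
by rewrite !starM starK sp sq mulrA -qsb -mulrA sbp mulrA qpb.
Qed.

Lemma in_sqrR_c_of_MP_mul : MP_invertible star (p * q) -> in_sqrR c.
Proof.
move=> [b /MP_inverse_mul_proj [bp qb qpb pqsb]].
have psb : p * star b = star b by rewrite -{2}bp starM sp.
have cb : c * b = p * b by rewrite mulrBl mulrDl qb mul1r addrK.
have csb : c * star b = q * star b by rewrite mulrBl mulrDl psb mul1r addrC addKr.
have cy : c * (b + star b - 1) = p * b + q * star b - c.
  by rewrite mulrBr mulrDr cb csb mulr1.
exists (b + star b - 1); rewrite expr2 -mulrA cy mulrBr mulrDr.
by rewrite (mulrA c p) mul_cp qpb (mulrA c q) mul_cq pqsb mul_cc subKr.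
Qed.

Lemma group_inverse_c g : group_inverse c g ->
  [/\ GRing.comm p (c * g), GRing.comm q (c * g) & q * g = g * p].
Proof.
move=> gc; have [cg _ gcg] := gc.
have gE : g = c * g * g by rewrite -{1}gcg -cg.
have [pc2 qc2] := comm_sqr_c.
have pg2 := group_inverse_comm (group_inverse_sqr gc) pc2.
have qg2 := group_inverse_comm (group_inverse_sqr gc) qc2.
have cgE : c * g = c ^+ 2 * g ^+ 2 by rewrite {1}gE !expr2 !mulrA.
rewrite cgE; split; try exact: commrM.
rewrite {1}gE !mulrA mul_qc -mul_cp -(mulrA (c * p) g g) -expr2 -(mulrA c p) pg2.
by rewrite expr2 !mulrA -gE.
Qed.

Lemma MP_mul_of_in_sqrR_c : in_sqrR c -> MP_invertible star (p * q).
Proof.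
move=> /(sa_group_inverse star_c) [g sg gc]; have [cg cgc _] := gc.
have [pe qe qg] := group_inverse_c gc.
have gE : g = c * g * g by case: gc => _ _ gcg; rewrite -{1}gcg -cg.
have se : star (c * g) = c * g by rewrite starM sg star_c -cg.
have pqqg : p * q * (q * g) = p * (c * g).
  by rewrite mulrA -(mulrA p q q) qq -mul_pc -mulrA.
have qgpq : q * g * (p * q) = c * g * q.
  by rewrite qg mulrA -(mulrA g p p) pp -mulrA -mul_cq mulrA -cg.
exists (q * g); split.
- by rewrite pqqg pe -(mulrA (c * g) p) (mulrA p p q) pp -mul_cq mulrA cgc.
- rewrite qgpq mulrA -(mulrA (c * g) q q) qq -(mulrA (c * g) q g) qg.
  by rewrite mulrA -gE.
- by rewrite pqqg starM se sp pe.
- by rewrite qgpq starM se sq qe.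
Qed.

Lemma MP_invertible_mul_projP :
  MP_invertible star (p * q) <-> MP_invertible star (p + q - 1).
Proof.
rewrite (sa_MP_invertibleP star_c); split.
- exact: in_sqrR_c_of_MP_mul.
- exact: MP_mul_of_in_sqrR_c.
Qed.
End Projections.
End Involution.

Theorem theorem2p14 (R : pzRingType) (star : R -> R)
    (Hinv : is_involution star) (Hred : star_reducing star)
    (p q : R) (Hp : is_projection star p) (Hq : is_projection star q) :
  MP_invertible star (p * q + q * p) <->
  (MP_invertible star (p + q) /\ MP_invertible star (p * q)).
Proof.
case: Hp Hq => pp sp [qq sq].
have spq : star (p + q) = p + q by rewrite (starD Hinv) sp sq.
rewrite -(mulDl_c pp qq) (MP_invertible_mul_subr1 Hinv spq).
by rewrite (MP_invertible_mul_projP Hinv pp sp qq sq).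
Qed.
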